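(* Let $(X_t)_{t\in T}$ be a real stochastic process indexed by a set $T$, let $k_1\geq 2$ be an integer, and let $(T_k)_{0\leq k\leq k_1}$ be subsets of $T$ with $|T_k|\leq e^{2^{k+1}}$ for $0\leq k\leq k_1$ and $T_{k_1}=T$. Let $\pi_k\colon T\to T_k$, $0\leq k\leq k_1$, be maps with $\pi_{k_1}(t)=t$ for all $t\in T$. Then for every integer $1\leq k_0\leq k_1-1$ and every $p$ with $2^{k_0-1}\leq p\leq 2^{k_0}$, \[ \Big\|\sup_{t\in T}|X_t|\Big\|_p\leq 3e^3\Big(\sup_{t\in T}\sum_{k=k_0+1}^{k_1}\|X_{\pi_k(t)}-X_{\pi_{k-1}(t)}\|_{2^k}+\sup_{t\in T_{k_0}}\|X_t\|_p\Big). \]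
   Context: $\|Y\|_p:=(\mathbb{E}|Y|^p)^{1/p}$ for a real random variable $Y$; $|T_k|$ is the cardinality (so $T$ is finite). *)

From HB Require Import structures.
From mathcomp Require Import all_boot all_order all_algebra.
From mathcomp Require Import all_classical all_reals all_analysis.
Set Implicit Arguments. Unset Strict Implicit. Unset Printing Implicit Defensive.
Import Order.TTheory GRing.Theory Num.Theory.
Local Open Scope ring_scope.

Definition pnorm d (Omega : measurableType d) (R : realType)
  (P : probability Omega R) (p : R) (Y : Omega -> R) : \bar R :=
  Lnorm P p%:E (EFin \o Y).

(* Telescoping along the approximations pi_k gives, pointwise,
   |X_t| <= |X_(pi_k0 t)| + sum_(k > k0) |X_(pi_k t) - X_(pi_(k-1) t)|.
   Write each increment as beta_k(t) * G_k(t) with beta_k(t) slightly larger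
   than ||X_(pi_k t) - X_(pi_(k-1) t)||_(2^k), so that ||G_k(t)||_(2^k) <= 1 and
   the increments are bounded by (sup_t sum_k beta_k(t)) * max_(k,t) G_k(t).
   Since p <= 2^k, the elementary bound x^p <= c^p + c^(p-2^k) x^(2^k) turns
   the maximum over the at most e^(3 2^k) links of level k into the union bound
   E (max G)^p <= c^p + sum_k |links_k| c^(p-2^k), which for c = 2e^3 is at most
   (3e^3)^p; similarly the maximum over T_k0 has p-norm at most
   |T_k0|^(1/p) sup ||X_t||_p <= e^4 sup ||X_t||_p.  Minkowski's inequality
   combines the two parts. *)

From HB Require Import structures.
From mathcomp Require Import all_boot all_order all_algebra.
From mathcomp Require Import all_classical all_reals all_analysis.
From mathcomp Require Import measurable_realfun lra zify.
Set Implicit Arguments. Unset Strict Implicit. Unset Printing Implicit Defensive.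
Import Order.TTheory GRing.Theory Num.Theory.
Local Open Scope ring_scope.

Section real_inequalities.
Variable R : realType.
Implicit Types (x y c p q : R).

Lemma le_powR_inv y x p : 0 < p -> 0 <= y -> 0 <= x ->
  y `^ p <= x -> y <= x `^ p^-1.
Proof.
move=> p0 y0 x0 yx.
have yE : (y `^ p) `^ p^-1 = y by rewrite -powRrM mulfV ?gt_eqF ?powRr1.
rewrite -{1}yE; apply: ge0_ler_powR => //.
- by rewrite invr_ge0 ltW.
by rewrite nnegrE powR_ge0.
Qed.

Lemma powR_inv_le x y p : 0 < p -> 0 <= x -> 0 <= y ->
  x <= y `^ p -> x `^ p^-1 <= y.
Proof.
move=> p0 x0 y0 xy.
have yE : (y `^ p) `^ p^-1 = y by rewrite -powRrM mulfV ?gt_eqF ?powRr1.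
rewrite -[X in _ <= X]yE; apply: ge0_ler_powR => //; first by rewrite invr_ge0 ltW.
by rewrite nnegrE powR_ge0.
Qed.

Lemma powR_le_split x c p q : 0 <= x -> 0 < c -> 0 < p -> p <= q ->
  x `^ p <= c `^ p + c `^ (p - q) * x `^ q.
Proof.
move=> x0 c0 p0 pq; have [xc|cx] := leP x c.
  apply: ler_wpDr; first by rewrite mulr_ge0 ?powR_ge0.
  by apply: ge0_ler_powR; rewrite ?nnegrE // ltW.
apply: ler_wpDl; first exact: powR_ge0.
have x0' : 0 < x by apply: lt_trans cx.
have -> : x `^ p = x `^ (p - q) * x `^ q.
  by rewrite -powRD ?gt_eqF ?implybT // subrK.
apply: ler_wpM2r; first exact: powR_ge0.
rewrite -(opprB q p) !powRN lef_pV2 ?posrE ?powR_gt0 //.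
by apply: ge0_ler_powR; rewrite ?nnegrE ?subr_ge0 // ltW.
Qed.

Lemma expR1_le3 : expR 1 <= 3 :> R.
Proof.
have h6 : expR (6^-1) <= 6 / 5 :> R.
  rewrite -[expR _]invrK -expRN -[6 / 5]invf_div lef_pV2 ?posrE ?expR_gt0 //.
  by apply: le_trans (expR_ge1Dx _); lra.
rewrite -[1](@mulVf _ 6%:R) // expRM_natr.
apply: (le_trans (y := (6 / 5) ^+ 6)); last by rewrite !exprS expr0; lra.
by apply: lerXn2r; rewrite ?nnegrE ?expR_ge0 //; lra.
Qed.

Lemma powR2D1_le_powR3 p : 1 <= p -> 2 `^ p + 1 <= 3 `^ p :> R.
Proof.
move=> p1.
have splitE (a : R) : 0 < a -> a `^ p = a `^ (p - 1) * a.
  by move=> a0; rewrite -{3}(powRr1 (ltW a0)) -powRD ?subrK // (gt_eqF a0) implybT.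
rewrite !splitE //.
have h2 : 2 `^ (p - 1) <= 3 `^ (p - 1) :> R.
  by apply: ge0_ler_powR; rewrite ?nnegrE ?subr_ge0 //; lra.
have h1 : 1 <= 3 `^ (p - 1) :> R.
  by have := @ler_powR R 3 ltac:(lra) 0 (p - 1); rewrite powRr0; apply; lra.
nra.
Qed.

Lemma sum_half_powers_le1 (m n : nat) :
  \sum_(m.+1 <= k < n.+1) (2^-1 : R) ^+ (k - m) <= 1.
Proof.
have [nm|mn] := leqP n m; first by rewrite big_geq ?ltnS.
rewrite -(subnKC (ltnW mn)).
suff -> : forall j, \sum_(m.+1 <= k < (m + j).+1) (2^-1 : R) ^+ (k - m) = 1 - 2^-1 ^+ j.
  by rewrite lerBlDr lerDl exprn_ge0.
elim=> [|j IH]; first by rewrite addn0 big_geq // expr0 subrr.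
rewrite addnS big_nat_recr /=; last by rewrite ltnS leq_addr.
by rewrite IH -addnS addKn exprS; lra.
Qed.

End real_inequalities.

Lemma leq_addn_expnD m j : (2 ^ m + j <= 2 ^ (m + j))%N.
Proof.
rewrite expnD; have := ltn_expl j (ltnSn 1); have := expn_gt0 2 m.
set a := (2 ^ j)%N; set b := (2 ^ m)%N; nia.
Qed.

Lemma chaining_weights_le (R : realType) (b p : R) (k0 k1 : nat) (N : nat -> R) :
  0 < b -> 1 <= p -> p <= (2 ^ k0)%:R ->
  (forall k, (k0 < k <= k1)%N -> N k <= b `^ (2 ^ k)%:R) ->
  (2 * b) `^ p + \sum_(k0.+1 <= k < k1.+1) (2 * b) `^ (p - (2 ^ k)%:R) * N k
    <= (3 * b) `^ p.
Proof.
move=> b0 p1 pk0 hN.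
(* (2b)^(p - 2^k) b^(2^k) = 2^(p - 2^k) b^p and 2^k >= 2^k0 + (k - k0) >= p + (k - k0). *)
have term k : (k0 < k <= k1)%N ->
    (2 * b) `^ (p - (2 ^ k)%:R) * N k <= b `^ p * 2^-1 ^+ (k - k0).
  move=> /andP[k0k kk1].
  apply: le_trans (ler_wpM2l (powR_ge0 _ _) (hN k _)) _; first by rewrite k0k.
  rewrite (powRM _ (ler0n _ 2) (ltW b0)) -mulrA -powRD ?subrK; last first.
    by rewrite (gt_eqF b0) implybT.
  rewrite mulrC; apply: ler_wpM2l; first exact: powR_ge0.
  rewrite exprVn -powR_invn //; apply: ler_powR; first by lra.
  have := leq_addn_expnD k0 (k - k0); rewrite (subnKC (ltnW k0k)) -(ler_nat R) natrD.
  lra.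
have sum_le : \sum_(k0.+1 <= k < k1.+1) (2 * b) `^ (p - (2 ^ k)%:R) * N k <= b `^ p.
  apply: le_trans (_ : \sum_(k0.+1 <= k < k1.+1) b `^ p * 2^-1 ^+ (k - k0) <= _).
    by rewrite !big_nat; apply: ler_sum => k /andP[k0k kk1]; apply: term; rewrite k0k.
  rewrite -mulr_sumr -[X in _ <= X]mulr1; apply: ler_wpM2l; first exact: powR_ge0.
  exact: sum_half_powers_le1.
apply: le_trans (lerD (lexx _) sum_le) _.
rewrite !powRM ?ler0n ?(ltW b0) // -[X in _ + X]mul1r -mulrDl.
by apply: ler_wpM2r; [exact: powR_ge0 | exact: powR2D1_le_powR3].
Qed.

Section Lnorm_bounds.
Context d (Omega : measurableType d) (R : realType).
Variable mu : {measure set Omega -> \bar R}.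
Local Notation "''N_' p [ f ]" := (Lnorm mu p%:E (EFin \o f)).

Lemma measurable_normr_powR (p : R) (f : Omega -> R) :
  measurable_fun setT f -> measurable_fun setT (fun w => `|f w| `^ p).
Proof. by move=> mf; apply: (measurableT_comp (measurable_powR _)); exact: measurableT_comp. Qed.

Lemma Lnorm_EFinE (p : R) (f : Omega -> R) :
  'N_p[f] = ((\int[mu]_w (`|f w| `^ p)%:E) `^ p^-1)%E.
Proof. by rewrite unlock. Qed.

Lemma le_Lnorm (p : R) (f g : Omega -> R) : 0 < p ->
  measurable_fun setT f -> measurable_fun setT g ->
  (forall w, `|f w| <= `|g w|) -> ('N_p[f] <= 'N_p[g])%E.
Proof.
move=> p0 mf mg fg; rewrite !Lnorm_EFinE.
apply: gt0_ler_poweR; first by rewrite invr_ge0 ltW.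
- by rewrite in_itv /= leey andbT integral_ge0 // => w _; rewrite lee_fin powR_ge0.
- by rewrite in_itv /= leey andbT integral_ge0 // => w _; rewrite lee_fin powR_ge0.
apply: ge0_le_integral => //.
- exact/measurable_EFinP/measurable_normr_powR.
- exact/measurable_EFinP/measurable_normr_powR.
by move=> w _; rewrite lee_fin ge0_ler_powR // ltW.
Qed.

Lemma Lnorm_powR_inv (p : R) (F : Omega -> R) : 0 < p -> (forall w, 0 <= F w) ->
  'N_p[(fun w => F w `^ p^-1)] = ((\int[mu]_w (F w)%:E) `^ p^-1)%E.
Proof.
move=> p0 F0; rewrite Lnorm_EFinE; congr (_ `^ _)%E; apply: eq_integral => w _.
by rewrite ger0_norm ?powR_ge0 // -powRrM mulVf ?gt_eqF // powRr1.
Qed.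

Lemma Lnorm_le_integral_root (p : R) (Y F : Omega -> R) : 0 < p ->
  measurable_fun setT Y -> measurable_fun setT F -> (forall w, 0 <= F w) ->
  (forall w, `|Y w| <= F w `^ p^-1) ->
  ('N_p[Y] <= (\int[mu]_w (F w)%:E) `^ p^-1)%E.
Proof.
move=> p0 mY mF F0 YF; rewrite -Lnorm_powR_inv //; apply: le_Lnorm => //.
  exact: (measurableT_comp (measurable_powR _)).
by move=> w; rewrite [X in _ <= X]ger0_norm ?powR_ge0.
Qed.

Lemma LnormZ_ge0 (p c : R) (f : Omega -> R) : 0 < p -> 0 <= c ->
  measurable_fun setT f -> 'N_p[(fun w => c * f w)] = (c%:E * 'N_p[f])%E.
Proof.
move=> p0 c0 mf; rewrite !Lnorm_EFinE.
under eq_integral do rewrite normrM powRM ?normr_ge0 // EFinM ger0_norm //.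
rewrite ge0_integralZl_EFin ?powR_ge0 //; last exact/measurable_EFinP/measurable_normr_powR.
rewrite poweRM ?lee_fin ?powR_ge0 //; last first.
  by rewrite integral_ge0 // => w _; rewrite lee_fin powR_ge0.
by rewrite poweR_EFin -powRrM mulfV ?gt_eqF // powRr1.
Qed.

Lemma integral_sum_le (I : eqType) (s : seq I) (a b : I -> R)
    (f : I -> Omega -> R) :
  (forall i, measurable_fun setT (f i)) -> (forall i w, 0 <= f i w) ->
  (forall i, 0 <= a i) -> {in s, forall i, (\int[mu]_w (f i w)%:E <= (b i)%:E)%E} ->
  (\int[mu]_w (\sum_(i <- s) a i * f i w)%:E <= (\sum_(i <- s) a i * b i)%:E)%E.
Proof.
move=> mf f0 a0 fb.
under eq_integral do rewrite -sumEFin.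
rewrite ge0_integral_sum //; last first.
- by move=> i w _; rewrite lee_fin mulr_ge0.
- by move=> i; apply/measurable_EFinP/measurable_funM => //; exact: measurable_cst.
rewrite -sumEFin big_seq [X in (_ <= X)%E]big_seq; apply: lee_sum => i si.
under eq_integral do rewrite EFinM.
rewrite ge0_integralZl_EFin //; last 2 first.
- by move=> w _; rewrite lee_fin.
- exact/measurable_EFinP.
by rewrite EFinM lee_wpmul2l ?lee_fin // fb.
Qed.

Lemma measurable_bigmax (I : Type) (s : seq I) (f : I -> Omega -> R) :
  (forall i, measurable_fun setT (f i)) ->
  measurable_fun setT (fun w => \big[Num.max/0]_(i <- s) f i w).
Proof.
move=> mf; elim: s => [|i s IH].
  by under eq_fun do rewrite big_nil; exact: measurable_cst.
by under eq_fun do rewrite big_cons; exact: measurable_maxr.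
Qed.

Lemma integral_normr_powR_le (p b : R) (f : Omega -> R) : 0 < p -> 0 <= b ->
  ('N_p[f] <= b%:E)%E -> (\int[mu]_w (`|f w| `^ p)%:E <= (b `^ p)%:E)%E.
Proof.
move=> p0 b0 fb; rewrite -poweR_EFin.
have -> : (\int[mu]_w (`|f w| `^ p)%:E = 'N_p[f] `^ p)%E by rewrite powR_Lnorm ?gt_eqF.
apply: gt0_ler_poweR => //; first exact: ltW.
- by rewrite in_itv /= Lnorm_ge0 leey.
- by rewrite in_itv /= lee_fin b0 leey.
Qed.

Lemma integral_powR_normalized_le1 (q b : R) (f : Omega -> R) : 0 < q -> 0 < b ->
  measurable_fun setT f -> ('N_q[f] <= b%:E)%E ->
  (\int[mu]_w ((`|f w| / b) `^ q)%:E <= 1)%E.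
Proof.
move=> q0 b0 mf fb.
have binv0 : 0 <= b^-1 by rewrite invr_ge0 ltW.
under eq_integral do rewrite powRM ?normr_ge0 // mulrC EFinM.
rewrite ge0_integralZl_EFin ?powR_ge0 //; last exact/measurable_EFinP/measurable_normr_powR.
apply: le_trans (_ : _ <= (b^-1 `^ q)%:E * (b `^ q)%:E)%E _.
  apply: lee_wpmul2l; first by rewrite lee_fin powR_ge0.
  exact: integral_normr_powR_le (ltW b0) fb.
by rewrite -EFinM -powRM ?(ltW b0) // mulVf ?gt_eqF // powR1.
Qed.

Lemma bigmax_le_powR_inv (I : eqType) (s : seq I) (p : R) (y : I -> R) (F : R) :
  0 < p -> 0 <= F -> {in s, forall i, 0 <= y i /\ y i `^ p <= F} ->
  \big[Num.max/0]_(i <- s) y i <= F `^ p^-1.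
Proof.
move=> p0 F0 yF; rewrite big_seq; apply: bigmax_le => [|i /yF[yi0 yiF]].
  exact: powR_ge0.
exact: le_powR_inv.
Qed.

Lemma Lnorm_bigmax_le (I : eqType) (s : seq I) (p a : R) (Y : I -> Omega -> R) :
  0 < p -> 0 <= a -> (forall i, measurable_fun setT (Y i)) ->
  {in s, forall i, ('N_p[Y i] <= a%:E)%E} ->
  ('N_p[(fun w => \big[Num.max/0]_(i <- s) `|Y i w|)%R]
    <= ((size s)%:R `^ p^-1 * a)%:E)%E.
Proof.
move=> p0 a0 mY Ya.
pose F w := \sum_(i <- s) 1 * `|Y i w| `^ p.
have F0 w : 0 <= F w by apply: sumr_ge0 => i _; rewrite mul1r powR_ge0.
have mF : measurable_fun setT F.
  by apply: measurable_sum => i; apply: measurable_funM => //; exact: measurable_normr_powR.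
apply: le_trans (Lnorm_le_integral_root p0 _ mF F0 _) _.
- by apply: measurable_bigmax => i; exact: measurableT_comp.
- move=> w; rewrite ger0_norm; last first.
    by rewrite big_seq; apply: bigmax_ge_id.
  apply: bigmax_le_powR_inv => // i si; split=> //.
  by rewrite /F (big_rem i si) /= mul1r lerDl sumr_ge0 // => j _; rewrite mul1r powR_ge0.
have intF : (\int[mu]_w (F w)%:E <= (\sum_(i <- s) 1 * a `^ p)%:E)%E.
  apply: integral_sum_le => // i.
  - exact: measurable_normr_powR.
  - by move=> si; apply: integral_normr_powR_le => //; exact: Ya.
apply: le_trans (gt0_ler_poweR _ _ _ intF) _.
- by rewrite invr_ge0 ltW.
- by rewrite in_itv /= leey andbT integral_ge0 // => w _; rewrite lee_fin.
- by rewrite in_itv /= leey andbT lee_fin sumr_ge0 // => i _; rewrite mul1r powR_ge0.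
rewrite poweR_EFin lee_fin; under eq_bigr do rewrite mul1r.
rewrite big_const_seq count_predT iter_addr_0.
by rewrite -[_ *+ size s]mulr_natr powRM ?powR_ge0 // -powRrM mulfV ?gt_eqF // powRr1 // mulrC.
Qed.

End Lnorm_bounds.

Section Lnorm_union_bound.
Context d (Omega : measurableType d) (R : realType).
Variable P : probability Omega R.

Lemma Lnorm_bigmax_union_le (I : eqType) (s : seq I) (p c : R) (q : I -> R)
    (G : I -> Omega -> R) :
  0 < p -> 0 < c -> (forall i, measurable_fun setT (G i)) ->
  (forall i w, 0 <= G i w) -> {in s, forall i, p <= q i} ->
  {in s, forall i, (\int[P]_w (G i w `^ q i)%:E <= 1)%E} ->
  (Lnorm P p%:E (EFin \o (fun w => \big[Num.max/0]_(i <- s) G i w)%R)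
    <= ((c `^ p + \sum_(i <- s) c `^ (p - q i)) `^ p^-1)%:E)%E.
Proof.
move=> p0 c0 mG G0 pq intG.
pose S w := \sum_(i <- s) c `^ (p - q i) * G i w `^ q i.
have S0 w : 0 <= S w by apply: sumr_ge0 => i _; rewrite mulr_ge0 ?powR_ge0.
have mS : measurable_fun setT S.
  apply: measurable_sum => i; apply: measurable_funM => //.
  exact: (measurableT_comp (measurable_powR _)).
have F0 w : 0 <= c `^ p + S w by rewrite addr_ge0 ?powR_ge0.
apply: le_trans (@Lnorm_le_integral_root _ _ _ P p _ (fun w => c `^ p + S w) p0 _ _ F0 _) _.
- exact: measurable_bigmax.
- exact: measurable_funD.
- move=> w; rewrite ger0_norm; last by rewrite big_seq; apply: bigmax_ge_id.
  apply: bigmax_le_powR_inv => // i si; split=> //.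
  apply: le_trans (powR_le_split (G0 i w) c0 p0 (pq i si)) _.
  rewrite lerD2l /S (big_rem i si) /= lerDl.
  by apply: sumr_ge0 => j _; rewrite mulr_ge0 ?powR_ge0.
have intF : (\int[P]_w (c `^ p + S w)%:E
    <= (c `^ p + \sum_(i <- s) c `^ (p - q i) * 1)%:E)%E.
  under eq_integral do rewrite EFinD.
  rewrite ge0_integralD //; first last.
  - exact/measurable_EFinP.
  - by move=> w _; rewrite lee_fin.
  - by move=> w _; rewrite lee_fin powR_ge0.
  have -> : (\int[P]_w (c `^ p)%:E = (c `^ p)%:E)%E.
    by rewrite integral_cst // -[RHS]mule1; congr (_ * _)%E; exact: probability_setT.
  rewrite EFinD leeD2l //.
  apply: integral_sum_le => // i.
  - exact: (measurableT_comp (measurable_powR _)).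
  - by move=> w; rewrite powR_ge0.
  - exact: powR_ge0.
apply: le_trans (gt0_ler_poweR _ _ _ intF) _.
- by rewrite invr_ge0 ltW.
- by rewrite in_itv /= leey andbT integral_ge0 // => w _; rewrite lee_fin.
- rewrite in_itv /= leey andbT lee_fin addr_ge0 ?powR_ge0 // sumr_ge0 // => i _.
  by rewrite mulr1 powR_ge0.
by rewrite poweR_EFin lee_fin; under eq_bigr do rewrite mulr1.
Qed.

End Lnorm_union_bound.

Lemma ler_norm_telescope (R : numDomainType) (f : nat -> R) (m n : nat) :
  (m <= n)%N -> `|f n| <= `|f m| + \sum_(m.+1 <= k < n.+1) `|f k - f k.-1|.
Proof.
move=> mn.
have -> : f n = f m + \sum_(m.+1 <= k < n.+1) (f k - f k.-1).
  by rewrite (telescope_sumr_eq (fun k => f k.-1)) //= addrC subrK.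
by apply: le_trans (ler_normD _ _) _; rewrite lerD2l ler_norm_sum.
Qed.

Section chain_links.
Variables (T : finType) (pi : nat -> T -> T) (k0 k1 : nat).

Definition chain_links k : {set T * T} := [set (pi k t, pi k.-1 t) | t : T].

Definition chain_link_seq : seq (nat * (T * T)) :=
  [seq (k, uv) | k <- index_iota k0.+1 k1.+1, uv <- enum (chain_links k)].

Lemma mem_chain_link_seq k t :
  (k0 < k <= k1)%N -> (k, (pi k t, pi k.-1 t)) \in chain_link_seq.
Proof.
move=> kr; apply/allpairsPdep; exists k, (pi k t, pi k.-1 t).
by rewrite mem_index_iota ltnS mem_enum kr; split=> //; apply/imsetP; exists t.
Qed.

Lemma chain_link_seqP i : i \in chain_link_seq ->
  exists t, (k0 < i.1 <= k1)%N /\ i.2 = (pi i.1 t, pi i.1.-1 t).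
Proof.
case/allpairsPdep=> k [uv [kr /[!mem_enum] /imsetP[t _ ->] ->]].
by exists t; move: kr; rewrite mem_index_iota ltnS.
Qed.

Lemma sum_chain_link_seq (R : nmodType) (F : nat -> R) :
  \sum_(i <- chain_link_seq) F i.1 = \sum_(k0.+1 <= k < k1.+1) F k *+ #|chain_links k|.
Proof.
rewrite big_allpairs_dep; apply: eq_bigr => k _ /=.
by rewrite big_const_seq count_predT -cardE iter_addr_0.
Qed.

Lemma chaining_pointwise (R : realType) (A : {set T}) (x : T -> R)
    (beta : nat -> T -> T -> R) (C : R) :
  (k0 <= k1)%N -> (forall t, pi k1 t = t) -> (forall t, pi k0 t \in A) ->
  (forall k u v, 0 < beta k u v) -> 0 <= C ->
  (forall t, \sum_(k0.+1 <= k < k1.+1) beta k (pi k t) (pi k.-1 t) <= C) ->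
  \big[Num.max/0]_(t : T) `|x t| <=
    \big[Num.max/0]_(u <- enum A) `|x u|
    + C * \big[Num.max/0]_(i <- chain_link_seq) (`|x i.2.1 - x i.2.2| / beta i.1 i.2.1 i.2.2).
Proof.
move=> k01 pik1 piA beta0 C0 betaC.
set MA := \big[Num.max/0]_(u <- enum A) _.
set M := \big[Num.max/0]_(i <- chain_link_seq) _.
have MA0 : 0 <= MA by rewrite /MA big_seq; apply: bigmax_ge_id.
have M0 : 0 <= M by rewrite /M big_seq; apply: bigmax_ge_id.
apply: bigmax_le => [|t _]; first by rewrite addr_ge0 ?mulr_ge0.
rewrite -{1}(pik1 t); apply: le_trans (ler_norm_telescope (fun k => x (pi k t)) k01) _.
apply: lerD.
  by apply: (le_bigmax_seq _ (pi k0 t) predT); rewrite ?mem_enum.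
apply: le_trans (_ : _ <= \sum_(k0.+1 <= k < k1.+1) beta k (pi k t) (pi k.-1 t) * M) _.
  rewrite !big_nat; apply: ler_sum => k kr.
  rewrite -[X in X <= _](divfK (lt0r_neq0 (beta0 k (pi k t) (pi k.-1 t)))) mulrC.
  apply: ler_wpM2l; first exact: ltW.
  apply: (le_bigmax_seq _ (k, (pi k t, pi k.-1 t)) predT) => //.
  by apply: mem_chain_link_seq; rewrite -ltnS.
by rewrite -mulr_suml ler_wpM2r.
Qed.

Lemma card_chain_links_le k (B B' : {set T}) :
  (forall t, pi k t \in B) -> (forall t, pi k.-1 t \in B') ->
  (#|chain_links k| <= #|B| * #|B'|)%N.
Proof.
move=> piB piB'; rewrite -cardsX; apply: subset_leq_card.
by apply/fintype.subsetP => _ /imsetP[t _ ->]; rewrite !inE /= piB piB'.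
Qed.

Lemma exists_chaining_scales (R : realType) (N : nat -> T -> T -> \bar R) (s eta : R) :
  (k0 < k1)%N -> 0 < eta -> (forall k u v, 0 <= N k u v)%E ->
  (forall t, \sum_(k0.+1 <= k < k1.+1) N k (pi k t) (pi k.-1 t) <= s%:E)%E ->
  exists beta : nat -> T -> T -> R,
    [/\ forall k u v, 0 < beta k u v,
        forall t, \sum_(k0.+1 <= k < k1.+1) beta k (pi k t) (pi k.-1 t) <= s + eta &
        forall k t, (k0 < k <= k1)%N ->
          (N k (pi k t) (pi k.-1 t) <= (beta k (pi k t) (pi k.-1 t))%:E)%E].
Proof.
move=> k01 eta0 N0 Ns.
(* The slack delta keeps the scales positive where a norm vanishes. *)
have n0 : 0 < (k1 - k0)%:R :> R by rewrite ltr0n subn_gt0.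
pose delta := eta / (k1 - k0)%:R.
have delta0 : 0 < delta by rewrite divr_gt0.
have Nfin t k : (k0 < k <= k1)%N -> N k (pi k t) (pi k.-1 t) \is a fin_num.
  move=> kr; rewrite ge0_fin_numE // (le_lt_trans _ (le_lt_trans (Ns t) (ltry s))) //.
  rewrite (big_rem k) ?mem_index_iota ?ltnS //= leeDl // sume_ge0 // => j _.
exists (fun k u v => fine (N k u v) + delta); split.
- by move=> k u v; rewrite ltr_wpDl // fine_ge0.
- move=> t; rewrite big_split /= sumr_const_nat subSS -mulr_natr divfK ?lt0r_neq0 //.
  rewrite lerD2r big_nat sum_fine -?big_nat; last by move=> k kr; apply: Nfin; rewrite -ltnS.
  by rewrite -lee_fin fineK ?Ns // ge0_fin_numE ?sume_ge0 // (le_lt_trans (Ns t) (ltry s)).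
- by move=> k t kr; rewrite -(fineK (Nfin t k kr)) lee_fin lerDl ltW.
Qed.

End chain_links.

Section Lnorm_chaining.
Context d (Omega : measurableType d) (R : realType) (P : probability Omega R).
Variables (T : finType) (X : T -> Omega -> R) (pi : nat -> T -> T) (k0 k1 : nat).
Variable A : {set T}.
Hypothesis mX : forall t, measurable_fun setT (X t).
Hypothesis k01 : (k0 <= k1)%N.
Hypothesis pik1 : forall t, pi k1 t = t.
Hypothesis piA : forall t, pi k0 t \in A.

Lemma Lnorm_chaining_le (p a c C : R) (beta : nat -> T -> T -> R) :
  1 <= p -> p <= (2 ^ k0.+1)%:R -> 0 <= a -> 0 < c -> 0 <= C ->
  (forall k u v, 0 < beta k u v) ->
  (forall t, \sum_(k0.+1 <= k < k1.+1) beta k (pi k t) (pi k.-1 t) <= C) ->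
  (forall k t, (k0 < k <= k1)%N ->
    (pnorm P (2 ^ k)%:R (fun w => X (pi k t) w - X (pi k.-1 t) w)%R
      <= (beta k (pi k t) (pi k.-1 t))%:E)%E) ->
  {in A, forall u, (pnorm P p (X u) <= a%:E)%E} ->
  (pnorm P p (fun w => \big[Num.max/0]_(t : T) `|X t w|)%R
    <= (#|A|%:R `^ p^-1 * a + C * (c `^ p
        + \sum_(k0.+1 <= k < k1.+1) c `^ (p - (2 ^ k)%:R) *+ #|chain_links pi k|) `^ p^-1)%:E)%E.
Proof.
move=> p1 pk0 a0 c0 C0 beta0 betaC Nbeta Xa.
have p0 : 0 < p by apply: lt_le_trans p1.
pose G i w := `|X i.2.1 w - X i.2.2 w| / beta i.1 i.2.1 i.2.2.
have mG i : measurable_fun setT (G i).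
  apply: measurable_funM; last exact: measurable_cst.
  by apply: measurableT_comp => //; exact: measurable_funB.
pose MA w := \big[Num.max/0]_(u <- enum A) `|X u w|.
pose M w := \big[Num.max/0]_(i <- chain_link_seq pi k0 k1) G i w.
have mMA : measurable_fun setT MA.
  by apply: measurable_bigmax => u; exact: measurableT_comp.
have mCM : measurable_fun setT (fun w => C * M w).
  by apply: measurable_funM; [exact: measurable_cst | exact: measurable_bigmax].
have M0 w : 0 <= M w by rewrite /M big_seq; apply: bigmax_ge_id.
apply: le_trans (@le_Lnorm _ _ _ P p _ (MA \+ (fun w => C * M w)) p0 _ _ _) _.
- by apply: measurable_bigmax => t; exact: measurableT_comp.
- exact: measurable_funD.
- move=> w; rewrite ger0_norm; last by apply: bigmax_ge_id.
  apply: le_trans (ler_norm _); apply: chaining_pointwise => //.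
apply: le_trans (@minkowski_EFin _ _ _ P _ _ p mMA mCM p1) _.
rewrite LnormZ_ge0 //; last exact: measurable_bigmax.
rewrite EFinD cardE; apply: leeD.
  by apply: Lnorm_bigmax_le => // u; rewrite mem_enum; exact: Xa.
rewrite EFinM; apply: lee_wpmul2l; first by rewrite lee_fin.
rewrite -(sum_chain_link_seq pi k0 k1 (fun k => c `^ (p - (2 ^ k)%:R))).
apply: (Lnorm_bigmax_union_le (q := fun i => (2 ^ i.1)%:R)) => //.
- by move=> i w; rewrite /G divr_ge0 // ltW.
- move=> i /chain_link_seqP[t [/andP[k0i _] _]]; apply: le_trans pk0 _.
  by rewrite ler_nat leq_pexp2l.
- move=> [k [u v]] /chain_link_seqP[t /= [kr [-> ->]]].
  apply: integral_powR_normalized_le1 => //; first exact: measurable_funB.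
  exact: Nbeta.
Qed.

End Lnorm_chaining.

Lemma level_card_root_le (R : realType) (n : R) (k : nat) (p : R) :
  (0 < k)%N -> 0 <= n -> n <= expR (2 ^ k.+1)%:R -> (2 ^ k.-1)%:R <= p ->
  n `^ p^-1 <= 3 * expR 3.
Proof.
move=> k0 n0 nk pk.
have p0 : 0 < p by apply: lt_le_trans pk; rewrite ltr0n expn_gt0.
apply: le_trans (_ : _ <= expR 4) _.
  apply: powR_inv_le => //.
  apply: (le_trans nk); rewrite -expRM ler_expR -(prednK k0) !expnS mulnA natrM.
  by rewrite ler_wpM2l.
by rewrite (_ : 4 = 1 + 3) // expRD ler_wpM2r ?expR_ge0 ?expR1_le3.
Qed.

Lemma chain_entropy_root_le (R : realType) (T : finType) (Tk : nat -> {set T})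
    (pi : nat -> T -> T) (k0 k1 : nat) (p : R) :
  (forall k, (k <= k1)%N -> #|Tk k|%:R <= expR (2 ^ k.+1)%:R :> R) ->
  (forall k t, (k <= k1)%N -> pi k t \in Tk k) ->
  1 <= p -> p <= (2 ^ k0)%:R ->
  ((2 * expR 3) `^ p + \sum_(k0.+1 <= k < k1.+1)
      (2 * expR 3) `^ (p - (2 ^ k)%:R) *+ #|chain_links pi k|) `^ p^-1
    <= 3 * expR 3.
Proof.
move=> hcard hpi p1 pk0; have p0 : 0 < p by apply: lt_le_trans p1.
apply: powR_inv_le => //.
  by rewrite addr_ge0 ?powR_ge0 // sumr_ge0 // => k _; rewrite mulrn_wge0 ?powR_ge0.
under eq_bigr do rewrite -mulr_natr.
apply: chaining_weights_le => // k /andP[k0k kk1].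
have kk1' : (k.-1 <= k1)%N by rewrite (leq_trans (leq_pred k)).
apply: le_trans (_ : _ <= #|Tk k|%:R * #|Tk k.-1|%:R) _.
  by rewrite -natrM ler_nat card_chain_links_le // => t; exact: hpi.
apply: le_trans (ler_pM (ler0n _ _) (ler0n _ _) (hcard k kk1) (hcard k.-1 kk1')) _.
rewrite -expRD -expRM ler_expR (prednK (leq_ltn_trans (leq0n _) k0k)) expnS natrM.
lra.
Qed.

Lemma lee_pmul_adde_slack (R : realType) (K : R) (x S A : \bar R) :
  0 < K -> (0 <= S)%E -> (0 <= A)%E ->
  (forall s a e, 0 <= s -> 0 <= a -> 0 < e -> S = s%:E -> A = a%:E ->
    (x <= (K * (s + a) + e)%:E)%E) ->
  (x <= K%:E * (S + A))%E.
Proof.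
move=> K0 S0 A0 hx.
have [SAfin|SAinf] := boolP (S + A \is a fin_num)%E; last first.
  have -> : (S + A = +oo)%E.
    by apply/eqP; move: SAinf; rewrite ge0_fin_numE ?adde_ge0 // ltey negbK.
  by rewrite muleC gt0_mulye ?leey ?lte_fin.
move: SAfin; rewrite fin_numD => /andP[Sfin Afin].
rewrite -(fineK Sfin) -(fineK Afin) -EFinD -EFinM; apply/lee_addgt0Pr => e e0.
by rewrite -EFinD; apply: hx; rewrite ?fine_ge0 ?fineK.
Qed.

Theorem proposition6p1
  (d : measure_display) (Omega : measurableType d) (R : realType)
  (P : probability Omega R) (T : finType) (X : T -> {RV P >-> R})
  (k1 : nat) (Tk : nat -> {set T}) (pi : nat -> T -> T)
  (hk1 : (2 <= k1)%N)
  (hcard : forall k, (k <= k1)%N -> (#|Tk k|)%:R <= expR (2 ^ k.+1)%:R :> R)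
  (hTk1 : Tk k1 = [set: T])
  (hpi : forall k t, (k <= k1)%N -> pi k t \in Tk k)
  (hpik1 : forall t, pi k1 t = t)
  (k0 : nat) (p : R)
  (hk0 : (1 <= k0 <= k1.-1)%N)
  (hp : (2 ^ k0.-1)%:R <= p <= (2 ^ k0)%:R) :
  (pnorm P p (fun w => \big[Num.max/0%R]_(t : T) `|X t w|%R)
   <= (3 * expR 3)%:E *
      (\big[Order.max/0%E]_(t : T)
         (\sum_(k0.+1 <= k < k1.+1)
            pnorm P ((2 ^ k)%:R)%R (fun w => (X (pi k t) w - X (pi k.-1 t) w)%R))
       + \big[Order.max/0%E]_(t in Tk k0) pnorm P p (fun w => X t w)))%E.
Proof.
move: hk0 hp => /andP[k0_gt0 k0k1] /andP[pk0 pk0'].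
have k01 : (k0 < k1)%N by lia.
have p1 : 1 <= p by apply: le_trans pk0; rewrite ler1n expn_gt0.
have pk0S : p <= (2 ^ k0.+1)%:R by rewrite (le_trans pk0') // ler_nat leq_pexp2l.
have K0 : 0 < 3 * expR 3 :> R by rewrite mulr_gt0 ?expR_gt0.
apply: lee_pmul_adde_slack => [//|||s a e s0 a0 e0 Se Ae]; try exact: bigmax_ge_id.
have Ss t : (\sum_(k0.+1 <= k < k1.+1)
    pnorm P (2 ^ k)%:R (fun w => X (pi k t) w - X (pi k.-1 t) w)%R <= s%:E)%E.
  by rewrite -Se; exact: le_bigmax.
have Xa : {in Tk k0, forall u, (pnorm P p (fun w => X u w) <= a%:E)%E}.
  by move=> u u0; rewrite -Ae; exact: le_bigmax_cond.
have [beta [beta0 betaS Nbeta]] := exists_chaining_scales (N := fun k u v =>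
    pnorm P (2 ^ k)%:R (fun w => X u w - X v w)%R) k01 (divr_gt0 e0 K0)
  (fun _ _ _ => Lnorm_ge0 _ _ _) Ss.
apply: le_trans (Lnorm_chaining_le (X := fun t => X t) (c := 2 * expR 3)
  (fun t => measurable_funPT (X t)) (ltnW k01) hpik1 (fun t => hpi k0 t (ltnW k01))
  p1 pk0S a0 _ _ beta0 betaS Nbeta Xa) _.
- by rewrite mulr_gt0 ?expR_gt0.
- by rewrite addr_ge0 // divr_ge0 // ltW.
have hA := level_card_root_le k0_gt0 (ler0n _ _) (hcard k0 (ltnW k01)) pk0.
have hW := chain_entropy_root_le hcard hpi p1 pk0'.
rewrite lee_fin; apply: le_trans (lerD (ler_wpM2r a0 hA) (ler_wpM2l _ hW)) _.
  by rewrite addr_ge0 // divr_ge0 // ltW.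
have eK : e / (3 * expR 3) * (3 * expR 3) = e by rewrite divfK ?lt0r_neq0.
by rewrite [(s + _) * _]mulrDl eK [_ * (s + a)]mulrDr; lra.
Qed.
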